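(* Every theorem of the proof system $\mathbf{P}$ is valid, i.e. its interpretation equals $\Omega$ in every belief model for $G$. In particular, for positive optimality conditions $\phi_i$ and every formula $\chi$, $[\![\mathit{rat}_\phi]\!]\cap[\![\Box\chi]\!]\subseteq[\![O_\phi\chi]\!]$.
   Context: Strategic game $G=(T_1,\dots,T_n,<_1,\dots,<_n)$, $\ge_i$ reflexive closure of $<_i$ on $T=\prod_iT_i$. Optimality condition for $i$: closed first-order formula over atoms $C(a)$, $a\ge^i_cb$, constant $o$; in $(G,G',s)$ with $o\mapsto s$: $C(x)$ iff $\alpha(x)_j\in G'_j$ for all $j$, $x\ge^i_zy$ iff $(\alpha(x)_i,\alpha(z)_{-i})\ge_i(\alpha(y)_i,\alpha(z)_{-i})$; positive if all $C(\cdot)$ under an even number of negations. Belief model $(\Omega,\bar s_1,\dots,\bar s_n,P_1,\dots,P_n)$, $(G_E)_i=\{\bar s_i(u):u\in E\}$. $\mathcal{L}_\nu$: $\psi::=\mathit{rat}_{\phi_i}\mid X\mid\psi\wedge\psi\mid\neg\psi\mid\Box_i\psi\mid O_{\phi_i}\psi\mid\nu X.\psi$ ($\nu$-free body), with $[\![\mathit{rat}_{\phi_i}]\!]_E=\{\omega:(G,G_{P_i(\omega)},\bar s(\omega))\models\phi_i\}$, $[\![X]\!]_E=E$, $[\![\Box_i\psi]\!]_E=\{\omega:P_i(\omega)\subseteq[\![\psi]\!]_E\}$, $[\![O_{\phi_i}\psi]\!]_E=\{\omega:(G,G_{[\![\psi]\!]_E},\bar s(\omega))\models\phi_i\}$,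 $[\![\nu X.\psi]\!]_E$ the transfinite-iteration outcome from $\Omega$ of $F\mapsto[\![\psi]\!]_F\cap F$. $\mathit{rat}_\phi,\Box,O_\phi$ are conjunctions over all players. Positive in $X$: $X$ under even negations and inside $O_{\phi_i}$ only for positive $\phi_i$. Proof system $\mathbf{P}$: propositional tautologies and modus ponens; axiom $\mathit{rat}_\phi\to(\Box\chi\to O_\phi\chi)$; axiom $\nu X.\psi\to\psi[X\mapsto\nu X.\psi]$; rule from $\chi\to\psi[X\mapsto\chi]$ infer $\chi\to\nu X.\psi$; in all of these all optimality conditions are positive and $\psi$ is positive in $X$. A formula is valid if $[\![\cdot]\!]_E=\Omega$ for all belief models and all $E\subseteq\Omega$. *)

From mathcomp Require Import all_boot.
Unset Printing Implicit Defensive.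

(*   Variables range over strategy profiles.                           *)
Inductive oterm : Type :=
  | OV (k : nat)
  | OO.

Inductive ofm : Type :=
  | OC (a : oterm)
  | OGe (a c b : oterm)               (* a >=^i_c b *)
  | ONot (p : ofm)
  | OAnd (p q : ofm)
  | OOr (p q : ofm)
  | OImp (p q : ofm)
  | OAll (k : nat) (p : ofm)
  | OEx (k : nat) (p : ofm).

Definition otfv (t : oterm) (k : nat) : Prop :=
  match t with OV m => m = k | OO => False end.

Fixpoint ofv (p : ofm) (k : nat) : Prop :=
  match p with
  | OC a => otfv a k
  | OGe a c b => otfv a k \/ otfv c k \/ otfv b k
  | ONot p => ofv p k
  | OAnd p q | OOr p q | OImp p q => ofv p k \/ ofv q k
  | OAll m p | OEx m p => m <> k /\ ofv p k
  end.

Definition oclosed (p : ofm) : Prop := forall k, ~ ofv p k.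

(* polarity of C-atoms: b = true means "under an even number of negations";
   the antecedent of an implication counts as a negation (A -> B = ~A \/ B). *)
Fixpoint opol (b : bool) (p : ofm) : Prop :=
  match p with
  | OC _ => b = true
  | OGe _ _ _ => True
  | ONot p => opol (~~ b) p
  | OAnd p q | OOr p q => opol b p /\ opol b q
  | OImp p q => opol (~~ b) p /\ opol b q
  | OAll _ p | OEx _ p => opol b p
  end.

Definition opositive (p : ofm) : Prop := opol true p.

Section Game.
Context {n : nat} {T : 'I_n -> Type}.
Definition prof := forall i : 'I_n, T i.
Variable lt : forall i : 'I_n, prof -> prof -> Prop.

Definition ge (i : 'I_n) (x y : prof) : Prop := lt i y x \/ x = y.

Definition dev (z : prof) (i : 'I_n) (a : T i) : prof :=
  fun j => match @eqP _ i j with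
           | ReflectT e => eq_rect i T a j e
           | ReflectF _ => z j
           end.

Definition geAt (i : 'I_n) (x z y : prof) : Prop :=
  ge i (dev z i (x i)) (dev z i (y i)).

Definition upd (env : nat -> prof) (k : nat) (x : prof) : nat -> prof :=
  fun m => if m == k then x else env m.

Definition oteval (s : prof) (env : nat -> prof) (t : oterm) : prof :=
  match t with OV k => env k | OO => s end.

(* satisfaction in (G, G', s) for player i; G' j is the restricted strategy set *)
Fixpoint osat (Gr : forall j : 'I_n, T j -> Prop) (i : 'I_n) (s : prof)
         (env : nat -> prof) (p : ofm) : Prop :=
  match p with
  | OC a => forall j, Gr j (oteval s env a j)
  | OGe a c b => geAt i (oteval s env a) (oteval s env c) (oteval s env b)
  | ONot p => ~ osat Gr i s env p
  | OAnd p q => osat Gr i s env p /\ osat Gr i s env q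
  | OOr p q => osat Gr i s env p \/ osat Gr i s env q
  | OImp p q => osat Gr i s env p -> osat Gr i s env q
  | OAll k p => forall x : prof, osat Gr i s (upd env k x) p
  | OEx k p => exists x : prof, osat Gr i s (upd env k x) p
  end.

(* (G, G', s) |= phi   (phi closed; the environment is irrelevant) *)
Definition omodels (Gr : forall j : 'I_n, T j -> Prop) (i : 'I_n) (s : prof)
           (p : ofm) : Prop := osat Gr i s (fun _ => s) p.

Record bmodel : Type := BModel {
  Om : Type;
  sbar : forall i : 'I_n, Om -> T i;
  Pb : 'I_n -> Om -> Om -> Prop
}.

Definition sprof {M : bmodel} (w : Om M) : prof := fun i => sbar M i w.

Definition GE {M : bmodel} (E : Om M -> Prop) : forall j : 'I_n, T j -> Prop :=
  fun j t => exists u, E u /\ sbar M j u = t.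

End Game.

Inductive form (n : nat) : Type :=
  | Rat (i : 'I_n) (p : ofm)
  | Var
  | And (a b : form n)
  | Not (a : form n)
  | Box (i : 'I_n) (a : form n)
  | Opt (i : 'I_n) (p : ofm) (a : form n)
  | Nu (a : form n).
Arguments Rat {n}. Arguments Var {n}. Arguments And {n}. Arguments Not {n}.
Arguments Box {n}. Arguments Opt {n}. Arguments Nu {n}.

Definition Imp {n} (a b : form n) : form n := Not (And a (Not b)).

(* nu X. X denotes Omega; used as the empty conjunction *)
Definition Top (n : nat) : form n := Nu Var.

Fixpoint bigAnd {n} (l : seq (form n)) : form n :=
  match l with
  | [::] => Top n
  | [:: a] => a
  | a :: l => And a (bigAnd l)
  end.

Definition RatAll {n} (phi : 'I_n -> ofm) : form n :=
  bigAnd [seq Rat i (phi i) | i <- enum 'I_n].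
Definition BoxAll {n} (chi : form n) : form n :=
  bigAnd [seq Box i chi | i <- enum 'I_n].
Definition OptAll {n} (phi : 'I_n -> ofm) (chi : form n) : form n :=
  bigAnd [seq Opt i (phi i) chi | i <- enum 'I_n].

Fixpoint nufree {n} (a : form n) : Prop :=
  match a with
  | Rat _ _ | Var => True
  | And a b => nufree a /\ nufree b
  | Not a | Box _ a | Opt _ _ a => nufree a
  | Nu _ => False
  end.

Fixpoint wf {n} (a : form n) : Prop :=
  match a with
  | Rat _ p => oclosed p
  | Var => True
  | And a b => wf a /\ wf b
  | Not a | Box _ a => wf a
  | Opt _ p a => oclosed p /\ wf a
  | Nu a => nufree a /\ wf a
  end.

Fixpoint allpos {n} (a : form n) : Prop :=
  match a with
  | Rat _ p => opositive p
  | Var => True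
  | And a b => allpos a /\ allpos b
  | Not a | Box _ a | Nu a => allpos a
  | Opt _ p a => opositive p /\ allpos a
  end.

Fixpoint freeX {n} (a : form n) : Prop :=
  match a with
  | Rat _ _ => False
  | Var => True
  | And a b => freeX a \/ freeX b
  | Not a | Box _ a | Opt _ _ a => freeX a
  | Nu _ => False
  end.

Fixpoint polX {n} (b : bool) (a : form n) : Prop :=
  match a with
  | Rat _ _ => True
  | Var => b = true
  | And a c => polX b a /\ polX b c
  | Not a => polX (~~ b) a
  | Box _ a => polX b a
  | Opt _ p a => (freeX a -> opositive p) /\ polX b a
  | Nu _ => True
  end.

Definition posX {n} (a : form n) : Prop := polX true a.

(* a[X |-> c] (X is bound under nu) *)
Fixpoint subst {n} (c : form n) (a : form n) : form n :=
  match a with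
  | Rat i p => Rat i p
  | Var => c
  | And a b => And (subst c a) (subst c b)
  | Not a => Not (subst c a)
  | Box i a => Box i (subst c a)
  | Opt i p a => Opt i p (subst c a)
  | Nu a => Nu a
  end.

(* The transfinite iteration of op from Omega: the least family of sets
   containing Omega, closed under op and under arbitrary intersections;
   its outcome is the intersection of this family (the final stage). *)
Inductive iter {O : Type} (op : (O -> Prop) -> (O -> Prop)) : (O -> Prop) -> Prop :=
  | it_top : iter op (fun _ => True)
  | it_step (X : O -> Prop) : iter op X -> iter op (op X)
  | it_meet (S : (O -> Prop) -> Prop) :
      (forall X, S X -> iter op X) -> iter op (fun w => forall X, S X -> X w).

Definition outcome {O : Type} (op : (O -> Prop) -> (O -> Prop)) : O -> Prop :=
  fun w => forall X, iter op X -> X w.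

Section Sem.
Context {n : nat} {T : 'I_n -> Type}.
Variable lt : forall i : 'I_n, @prof n T -> @prof n T -> Prop.
Context {M : @bmodel n T}.

Fixpoint sem (a : form n) (E : Om M -> Prop) : Om M -> Prop :=
  match a with
  | Rat i p => fun w => omodels lt (GE (Pb M i w)) i (sprof w) p
  | Var => E
  | And a b => fun w => sem a E w /\ sem b E w
  | Not a => fun w => ~ sem a E w
  | Box i a => fun w => forall u, Pb M i w u -> sem a E u
  | Opt i p a => fun w => omodels lt (GE (sem a E)) i (sprof w) p
  | Nu a => outcome (fun F w => sem a F w /\ F w)
  end.
End Sem.

Definition valid {n} {T : 'I_n -> Type} (lt : forall i : 'I_n, @prof n T -> @prof n T -> Prop)
           (a : form n) : Prop :=
  forall (M : @bmodel n T) (E : Om M -> Prop) (w : Om M), sem lt a E w.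

Inductive pform : Type :=
  | PV (k : nat)
  | PNot (p : pform)
  | PAnd (p q : pform).

Fixpoint peval (v : nat -> bool) (p : pform) : bool :=
  match p with
  | PV k => v k
  | PNot p => ~~ peval v p
  | PAnd p q => peval v p && peval v q
  end.

Definition tautology (p : pform) : Prop := forall v, peval v p = true.

Fixpoint psub {n} (sg : nat -> form n) (p : pform) : form n :=
  match p with
  | PV k => sg k
  | PNot p => Not (psub sg p)
  | PAnd p q => And (psub sg p) (psub sg q)
  end.

Inductive Prov {n : nat} : form n -> Prop :=
  | P_taut (p : pform) (sg : nat -> form n) :
      tautology p -> wf (psub sg p) -> Prov (psub sg p)
  | P_mp (a b : form n) : Prov a -> Prov (Imp a b) -> Prov b
  | P_rat (phi : 'I_n -> ofm) (chi : form n) :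
      (forall i, oclosed (phi i)) -> (forall i, opositive (phi i)) ->
      wf chi -> allpos chi ->
      Prov (Imp (RatAll phi) (Imp (BoxAll chi) (OptAll phi chi)))
  | P_nu (psi : form n) :
      wf (Nu psi) -> allpos psi -> posX psi ->
      Prov (Imp (Nu psi) (subst (Nu psi) psi))
  | P_nurule (chi psi : form n) :
      wf chi -> wf (Nu psi) -> allpos chi -> allpos psi -> posX psi ->
      Prov (Imp chi (subst chi psi)) -> Prov (Imp chi (Nu psi)).

(* The only non-trivial ingredient is monotonicity: an optimality condition in which C
   occurs only positively is preserved when the restricted game G' grows, and a formula
   that is positive in X has a semantics monotone in the interpretation of X.  The first
   gives soundness of the rationality axiom, since [[Box_i chi]] at w says that every
   strategy in G_{P_i(w)} is already in G_{[[chi]]}.  For the nu operator, the outcome of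
   the transfinite iteration is itself a stage, so it is a post-fixed point of
   F |-> [[psi]]_F /\ F (the unfolding axiom, which needs no monotonicity); and by
   monotonicity any post-fixed point is contained in every stage (the coinduction rule). *)

From mathcomp Require Import all_boot.
From Stdlib Require Import Classical ClassicalEpsilon.

Section Outcome.
Variables (O : Type) (op : (O -> Prop) -> O -> Prop).

Lemma iter_outcome : iter op (outcome op).
Proof. by apply: it_meet. Qed.

Lemma outcome_postfixed w : outcome op w -> op (outcome op) w.
Proof. by move=> Hw; apply: Hw _ (it_step _ _ iter_outcome). Qed.

Lemma sub_outcome (C : O -> Prop) :
  (forall X Y : O -> Prop, (forall w, X w -> Y w) -> forall w, op X w -> op Y w) ->
  (forall w, C w -> op C w) -> forall w, C w -> outcome op w.
Proof.
move=> op_mono C_post w Cw X HX; elim: HX w Cw => [//|Y _ IH w Cw|S _ IH w Cw Y SY].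
- exact: op_mono IH _ (C_post w Cw).
- exact: IH.
Qed.

End Outcome.

Section Soundness.
Context {n : nat} {T : 'I_n -> Type} {lt : forall i : 'I_n, @prof n T -> @prof n T -> Prop}.

Lemma osat_mono {Gr Gr' : forall j : 'I_n, T j -> Prop} i p :
  (forall j t, Gr j t -> Gr' j t) ->
  forall b s env, opol b p ->
  if b then osat lt Gr i s env p -> osat lt Gr' i s env p
  else osat lt Gr' i s env p -> osat lt Gr i s env p.
Proof.
move=> sub_Gr; elim: p => [a|a c d|p IH|p IHp q IHq|p IHp q IHq|p IHp q IHq|k p IH|k p IH]
  b s env /=.
- by move=> -> /= H j; apply/sub_Gr/H.
- by case: b.
- by move=> /(IH _ s env) Hp; case: b Hp => /=; tauto.
- by case=> /(IHp _ s env) Hp /(IHq _ s env) Hq; case: b Hp Hq => /=; tauto.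
- by case=> /(IHp _ s env) Hp /(IHq _ s env) Hq; case: b Hp Hq => /=; tauto.
- by case=> /(IHp _ s env) Hp /(IHq _ s env) Hq; case: b Hp Hq => /=; tauto.
- move=> Hp; have {}IH x := IH _ s (upd env k x) Hp.
  by case: b {Hp} IH => /= IH H x; apply: IH.
- move=> Hp; have {}IH x := IH _ s (upd env k x) Hp.
  by case: b {Hp} IH => /= IH [x H]; exists x; apply: IH.
Qed.

Lemma omodels_mono (Gr Gr' : forall j : 'I_n, T j -> Prop) i s p :
  (forall j t, Gr j t -> Gr' j t) -> opositive p ->
  omodels lt Gr i s p -> omodels lt Gr' i s p.
Proof. by move=> sub_Gr Hp; apply: (osat_mono i p sub_Gr true). Qed.

Lemma GE_mono (M : @bmodel n T) (E E' : Om M -> Prop) :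
  (forall w, E w -> E' w) -> forall j t, GE E j t -> GE E' j t.
Proof. by move=> sub_E j t [u [Eu <-]]; exists u; split; first exact: sub_E. Qed.

Context {M : @bmodel n T}.
Implicit Types (a c chi psi : form n) (E F : Om M -> Prop).

Lemma sem_Imp a (b : form n) E w : sem lt (Imp a b) E w <-> (sem lt a E w -> sem lt b E w).
Proof. by split=> [H Ha|H [/H]//]; apply: NNPP => Hb; apply: H. Qed.

Lemma sem_subst c a E : sem lt (subst c a) E = sem lt a (sem lt c E).
Proof. by elim: a => //= [a -> b ->|a ->|i a ->|i p a ->]. Qed.

Lemma sem_freeXN a F F' : ~ freeX a -> sem lt a F = sem lt a F'.
Proof.
elim: a => //= [a IHa b IHb|a IH|i a IH|i p a IH] freeXN; rewrite ?IH //.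
by rewrite IHa ?IHb //; tauto.
Qed.

Lemma sem_mono a b : polX b a -> forall F F', (forall w, F w -> F' w) ->
  if b then forall w, sem lt a F w -> sem lt a F' w
  else forall w, sem lt a F' w -> sem lt a F w.
Proof.
elim: a b => [i p||a IHa c IHc|a IH|i a IH|i p a IH|a _] b /= pol F F' sub_F.
- by case: b.
- by rewrite pol.
- case: pol => /IHa/(_ F F' sub_F) Ha /IHc/(_ F F' sub_F) Hc.
  by case: b Ha Hc => /= Ha Hc w [/Ha ? /Hc ?].
- by move: (IH _ pol F F' sub_F); case: b {pol} => /= H w Ha /H.
- by move: (IH _ pol F F' sub_F); case: b {pol} => /= H w Ha u /Ha /H.
- case: (classic (freeX a)) pol => [Xa [/(_ Xa) posp pol]|XaN _].
    move: (IH _ pol F F' sub_F); case: b {pol} => /= {}IH w;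
    by apply: omodels_mono posp; apply: GE_mono.
  by rewrite (sem_freeXN a F F' XaN); case: b.
- by case: b.
Qed.

Lemma sem_Top E w : sem lt (Top n) E w.
Proof. by move=> X; elim. Qed.

Lemma sem_bigAnd_map (I : eqType) (f : I -> form n) (s : seq I) E w :
  sem lt (bigAnd [seq f i | i <- s]) E w <-> (forall i, i \in s -> sem lt (f i) E w).
Proof.
elim: s => [|x s IH]; first by split=> // _; apply: sem_Top.
have cons_iff (P : I -> Prop) :
    (forall i, i \in x :: s -> P i) <-> P x /\ (forall i, i \in s -> P i).
  split=> [H|[Px H] i]; first by split=> [|i si]; apply: H; rewrite inE ?eqxx ?si ?orbT.
  by rewrite inE => /orP[/eqP->|/H].
rewrite cons_iff; case: s IH {cons_iff} => [|y s] IH /=; last by rewrite IH.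
by split=> [|[]//]; split.
Qed.

Lemma sem_bigAnd_enum (f : 'I_n -> form n) E w :
  sem lt (bigAnd [seq f i | i <- enum 'I_n]) E w <-> (forall i, sem lt (f i) E w).
Proof.
rewrite sem_bigAnd_map.
by split=> H i; [apply: H; rewrite mem_enum | move=> _; apply: H].
Qed.

Lemma sem_RatAll_BoxAll (phi : 'I_n -> ofm) chi E :
  (forall i, opositive (phi i)) -> forall w,
  sem lt (RatAll phi) E w -> sem lt (BoxAll chi) E w -> sem lt (OptAll phi chi) E w.
Proof.
move=> posphi w /sem_bigAnd_enum rat /sem_bigAnd_enum box; apply/sem_bigAnd_enum => i.
by apply: omodels_mono (posphi i) (rat i); apply: GE_mono; apply: box.
Qed.

Lemma sem_psub {sg : nat -> form n} {v : nat -> bool} {E w} :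
  (forall k, reflect (sem lt (sg k) E w) (v k)) ->
  forall p, reflect (sem lt (psub sg p) E w) (peval v p).
Proof. by move=> sgP; elim=> [k|p IH|p IHp q IHq] /=; [|apply: negPP|apply: andPP]. Qed.

Lemma tautology_sem (p : pform) (sg : nat -> form n) E w :
  tautology p -> sem lt (psub sg p) E w.
Proof.
pose v k := if excluded_middle_informative (sem lt (sg k) E w) then true else false.
have vP k : reflect (sem lt (sg k) E w) (v k).
  by rewrite /v; case: excluded_middle_informative; constructor.
by move=> taut; apply/(sem_psub vP); apply: taut.
Qed.

Lemma sem_Nu_unfold psi E w : sem lt (Nu psi) E w -> sem lt (subst (Nu psi) psi) E w.
Proof. by rewrite sem_subst /= => /(outcome_postfixed _ _ w)[]. Qed.

Lemma sem_Nu_coind chi psi E : posX psi ->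
  (forall w, sem lt chi E w -> sem lt (subst chi psi) E w) ->
  forall w, sem lt chi E w -> sem lt (Nu psi) E w.
Proof.
move=> posXpsi chi_post; apply: sub_outcome => [X Y sub_XY w /= [Hpsi Xw]|w Hw].
  by split; [apply: (sem_mono _ _ posXpsi _ _ sub_XY) | apply: sub_XY].
by split=> //; move: (chi_post w Hw); rewrite sem_subst.
Qed.

End Soundness.

Theorem mainTheorem10 (n : nat) (T : 'I_n -> Type)
    (lt : forall i : 'I_n, @prof n T -> @prof n T -> Prop) :
  (forall a : form n, Prov a -> valid lt a) /\
  (forall (M : @bmodel n T) (phi : 'I_n -> ofm) (chi : form n) (E : Om M -> Prop),
      (forall i, oclosed (phi i)) -> (forall i, opositive (phi i)) -> wf chi ->
      forall w : Om M,
        sem lt (RatAll phi) E w -> sem lt (BoxAll chi) E w ->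
        sem lt (OptAll phi chi) E w).
Proof.
split; last by move=> M phi chi E _ posphi _; apply: sem_RatAll_BoxAll.
move=> a; elim=> {a} [p sg taut _|a b _ IHa _ IHab|phi chi _ posphi _ _|psi _ _ _
                     |chi psi _ _ _ _ posXpsi _ IH] M E w.
- exact: tautology_sem.
- by move/sem_Imp: (IHab M E w); apply; apply: IHa.
- by rewrite !sem_Imp; apply: sem_RatAll_BoxAll.
- by rewrite sem_Imp; apply: sem_Nu_unfold.
- apply/sem_Imp; move: w; apply: (sem_Nu_coind _ _ _ posXpsi) => u; apply/sem_Imp/IH.
Qed.
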